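(* Let $n\ge2$, $\delta>0$, $R>0$, and let $\mathbf{a}\in\mathbb{R}^n$ be a fixed nonzero vector with $-2\le\mathbf{a}_i\le2$ for all $i$ and $\mathbf{a}^\top\mathbf{1}=0$. Let $\mathbf{y}$ be uniformly distributed on the sphere $\{\mathbf{y}\in\mathbb{R}^n:\|\mathbf{y}\|_2=R\}$, and let $\tilde{\mathbf{y}}$ be obtained by rounding each entry of $\mathbf{y}$ to precision $\delta$, so that $|\tilde{\mathbf{y}}_i-\mathbf{y}_i|\le\delta$ for all $i$. Then $$\Pr\big(\mathbf{a}^\top\tilde{\mathbf{y}}=0\big)\le\frac{2\delta n^2}{\|\mathbf{a}\|_2R}.$$
   Context: $\mathbf{1}$ denotes the all-ones vector in $\mathbb{R}^n$. *)

From HB Require Import structures.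
From mathcomp Require Import all_boot all_order all_algebra.
From mathcomp Require Import all_classical all_reals all_analysis.
Set Implicit Arguments. Unset Strict Implicit. Unset Printing Implicit Defensive.
Import Order.TTheory GRing.Theory Num.Theory.
Local Open Scope classical_set_scope.
Local Open Scope ring_scope.

Definition norm2 {R : realType} {n : nat} (v : 'rV[R]_n) : R :=
  Num.sqrt (\sum_(i < n) v ord0 i ^+ 2).

Definition dotv {R : realType} {n : nat} (u v : 'rV[R]_n) : R :=
  \sum_(i < n) u ord0 i * v ord0 i.

(* Borel sigma-algebra on R^n = sigma-algebra generated by the coordinates. *)
Definition vmeasurable {R : realType} {n : nat} (A : set 'rV[R]_n) : Prop :=
  g_sigma_preimage (fun (i : 'I_n) (v : 'rV[R]_n) => v ord0 i) A.

Definition orthogonal {R : realType} {n : nat} (Q : 'M[R]_n) : Prop :=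
  Q *m Q^T = 1%:M.

(* y : T -> R^n is a random vector uniformly distributed on the sphere of
   radius rad: it takes values on the sphere, is Borel measurable, and its law
   is the (unique) rotation-invariant probability measure on that sphere,
   i.e. the normalized surface measure. *)
Definition uniform_on_sphere {d : measure_display} {T : measurableType d}
    {R : realType} {n : nat} (P : probability T R) (rad : R)
    (y : T -> 'rV[R]_n) : Prop :=
  [/\ (forall t, norm2 (y t) = rad),
      (forall A, vmeasurable A -> measurable (y @^-1` A)) &
      (forall (Q : 'M[R]_n) (A : set 'rV[R]_n), orthogonal Q -> vmeasurable A ->
         P (y @^-1` A) = P ((fun t => y t *m Q) @^-1` A))].

From Pilot Require Import Defs.
From HB Require Import structures.
From mathcomp Require Import all_boot all_order all_algebra.
From mathcomp Require Import all_classical all_reals all_analysis.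
From mathcomp Require Import measurable_realfun.
From mathcomp Require Import zify ring lra.
Import Order.TTheory GRing.Theory Num.Theory.
Local Open Scope classical_set_scope.
Local Open Scope ring_scope.
Set Implicit Arguments. Unset Strict Implicit.

(* Rounding moves each coordinate of y by at most delta, so a^T y~ = 0 forces
   |a^T y| <= delta ||a||_1 <= 2 delta n: y lies in the slab of half-width
   tau = delta ||a||_1 around the hyperplane a^T y = 0.  Rotation invariance
   (via a Householder reflection) makes the probability p of that slab the same
   for every normal vector b with ||b|| = ||a||.  Averaging over the N^n normals
   proportional to the grid points z_f with odd integer coordinates in (-N, N)
   (N even): every y on the sphere has a coordinate with |y_i| >= R / sqrt n,
   and along that coordinate the values z_f^T y form an arithmetic progression
   of step 2 |y_i|, so y lies in at most a fraction
   tau n / (||a|| R) + 1 / N of these slabs.  Hence p <= tau n / (||a|| R) + 1/N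
   for all even N, and p <= tau n / (||a|| R) <= 2 delta n^2 / (||a|| R). *)

Definition slab (R : realType) (n : nat) (b : 'rV[R]_n) (tau : R) : set 'rV[R]_n :=
  [set v | `|dotv b v| <= tau].

Section inner_product.
Variables (R : realType) (n : nat).
Implicit Types (u v w : 'rV[R]_n) (k : R).

Lemma dotvC u v : dotv u v = dotv v u.
Proof. by apply: eq_bigr => i _; rewrite mulrC. Qed.

Lemma dotvBr u v w : dotv u (v - w) = dotv u v - dotv u w.
Proof. by rewrite /dotv -sumrB; apply: eq_bigr => i _; rewrite !mxE mulrBr. Qed.

Lemma dotvBl u v w : dotv (u - v) w = dotv u w - dotv v w.
Proof. by rewrite dotvC dotvBr !(dotvC w). Qed.

Lemma dotvZr k u v : dotv u (k *: v) = k * dotv u v.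
Proof. by rewrite /dotv mulr_sumr; apply: eq_bigr => i _; rewrite !mxE mulrCA. Qed.

Lemma dotvZl k u v : dotv (k *: u) v = k * dotv u v.
Proof. by rewrite dotvC dotvZr dotvC. Qed.

Lemma mulmx_trE u v : u *m v^T = (dotv u v)%:M.
Proof.
by rewrite [LHS]mx11_scalar !mxE; congr _%:M; apply: eq_bigr => j _; rewrite !mxE.
Qed.

Lemma dotvv_eq0 v : (dotv v v == 0) = (v == 0).
Proof.
apply/idP/eqP => [|->]; last by rewrite /dotv big1 // => i _; rewrite mxE mul0r.
rewrite psumr_eq0 => [/allP v0|i _]; last by rewrite -expr2 sqr_ge0.
apply/rowP => j; rewrite mxE.
by have /= := v0 j (mem_index_enum _); rewrite mulf_eq0 orbb => /eqP.
Qed.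

Lemma dotvv_ge0 v : 0 <= dotv v v.
Proof. by apply: sumr_ge0 => i _; rewrite -expr2 sqr_ge0. Qed.

Lemma norm2E v : norm2 v = Num.sqrt (dotv v v).
Proof. by congr Num.sqrt; apply: eq_bigr => i _; rewrite expr2. Qed.

Lemma norm2_sqr v : norm2 v ^+ 2 = dotv v v.
Proof. by rewrite norm2E sqr_sqrtr ?dotvv_ge0. Qed.

Lemma norm2_gt0 v : (0 < norm2 v) = (v != 0).
Proof. by rewrite norm2E sqrtr_gt0 lt_def dotvv_eq0 dotvv_ge0 andbT. Qed.

Lemma exists_big_coord v : (0 < n)%N ->
  exists i, norm2 v / Num.sqrt n%:R <= `|v ord0 i|.
Proof.
move=> n_gt0; apply/not_existsP => small.
have : dotv v v < \sum_(i < n) (norm2 v / Num.sqrt n%:R) ^+ 2.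
  apply: ltr_sum; first by apply/hasP; exists (Ordinal n_gt0); rewrite ?mem_index_enum.
  move=> i _; rewrite -expr2 -real_normK ?num_real // ltrXn2r //.
  by rewrite ltNge; apply/negP/small.
rewrite sumr_const card_ord expr_div_n norm2_sqr sqr_sqrtr ?ler0n //.
by rewrite -[_ / _ *+ _]mulr_natr divfK ?ltxx // pnatr_eq0 -lt0n.
Qed.

Lemma norm_dotv_le u v e : (forall i, `|v ord0 i| <= e) ->
  `|dotv u v| <= e * \sum_i `|u ord0 i|.
Proof.
move=> v_le; rewrite mulr_sumr; apply: le_trans (ler_norm_sum _ _ _) _.
by apply: ler_sum => i _; rewrite normrM mulrC; exact: ler_wpM2r.
Qed.

Lemma slab_of_dotv_eq0 u v w e : (forall i, `|v ord0 i - w ord0 i| <= e) ->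
  dotv u w = 0 -> slab u (e * \sum_i `|u ord0 i|) v.
Proof.
move=> vw_le uw0; rewrite /slab /=.
have -> : dotv u v = dotv u (v - w) by rewrite dotvBr uw0 subr0.
by apply: norm_dotv_le => i; rewrite !mxE.
Qed.

Lemma slabZ k u tau : 0 < k -> slab (k *: u) tau = slab u (tau / k).
Proof.
move=> k_gt0; apply: eq_set => v.
by rewrite dotvZl normrM gtr0_norm // ler_pdivlMr // mulrC.
Qed.

End inner_product.

Lemma householder_reflection (R : realType) n (b c : 'rV[R]_n) :
  dotv b b = dotv c c ->
  exists2 Q : 'M[R]_n, Defs.orthogonal Q & forall x, dotv b (x *m Q) = dotv c x.
Proof.
move=> bb_cc; have [<-|b_neq_c] := eqVneq b c.
  by exists 1%:M => [|x]; rewrite /Defs.orthogonal ?trmx1 mulmx1.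
pose v := b - c; pose k := 2 / dotv v v; pose P := v^T *m v.
have vv_neq0 : dotv v v != 0 by rewrite dotvv_eq0 subr_eq0.
have bv : dotv b v * 2 = dotv v v.
  by rewrite /v !dotvBr !dotvBl bb_cc (dotvC c b); ring.
exists (1%:M - k *: P) => [|x].
  have PP : P *m P = dotv v v *: P.
    by rewrite mulmxA -(mulmxA v^T) mulmx_trE mul_mx_scalar scalemxAl.
  have kk : k * k * dotv v v = 2 * k by rewrite /k; field.
  have tP : P^T = P by rewrite trmx_mul trmxK.
  rewrite /Defs.orthogonal [X in _ *m X]linearB /= trmx1.
  rewrite [X in _ *m (_ - X)]linearZ /= tP.
  rewrite mulmxBr mulmx1 mulmxBl mul1mx -!scalemxAr -!scalemxAl PP !scalerA kk.
  by apply/matrixP => i j; rewrite !mxE; ring.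
have bv_neq0 : dotv b v != 0.
  by apply: contraNneq vv_neq0; rewrite -bv => ->; rewrite mul0r.
have kbv : k * dotv b v = 1 by rewrite /k -bv; field.
rewrite mulmxBr mulmx1 -scalemxAr mulmxA mulmx_trE mul_scalar_mx scalerA.
rewrite dotvBr dotvZr -mulrA (mulrC (dotv x v)) mulrA kbv mul1r.
by rewrite dotvBr !(dotvC x); ring.
Qed.

Definition rowvec (R : realType) (n : nat) : Type := 'rV[R]_n.

Section measurable_rowvec.
Variables (R : realType) (n : nat).

HB.instance Definition _ := Choice.on (rowvec R n).
HB.instance Definition _ := isPointed.Build (rowvec R n) 0.

Let vmeasurable0 : @vmeasurable R n set0.
Proof. exact: sigma_algebra0. Qed.

Let vmeasurableC (A : set (rowvec R n)) : vmeasurable A -> vmeasurable (~` A).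
Proof. by rewrite -setTD; exact: sigma_algebraCD. Qed.

Let vmeasurable_bigcup (F : (set (rowvec R n))^nat) :
  (forall i, vmeasurable (F i)) -> vmeasurable (\bigcup_i F i).
Proof. rewrite /vmeasurable /g_sigma_preimage; exact: sigma_algebra_bigcup. Qed.

HB.instance Definition _ := @isMeasurable.Build default_measure_display
  (rowvec R n) vmeasurable vmeasurable0 vmeasurableC vmeasurable_bigcup.

Lemma measurable_coord i : measurable_fun setT (fun v : rowvec R n => v ord0 i).
Proof.
move=> _ Y mY; rewrite setTI; apply: sub_sigma_algebra.
rewrite -bigcup_seq /=; exists i; first by rewrite /= mem_index_enum.
by exists Y => //; rewrite setTI.
Qed.

Lemma measurable_dotv_map (b : 'rV[R]_n) (g : R -> R) : measurable_fun setT g ->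
  measurable_fun setT (fun v : rowvec R n => dotv b (map_mx g v)).
Proof.
move=> mg; rewrite /dotv; apply: measurable_sum => i.
apply: (eq_measurable_fun (fun v : rowvec R n => b ord0 i * g (v ord0 i))).
  by move=> v _; rewrite mxE.
exact: measurableT_comp (mulrl_measurable _) (measurableT_comp mg (measurable_coord i)).
Qed.

Lemma vmeasurable_slab (b : 'rV[R]_n) tau : vmeasurable (slab b tau).
Proof.
have mdot : measurable_fun setT (fun v : rowvec R n => dotv b v).
  apply: eq_measurable_fun (measurable_dotv_map b (@measurable_id _ R setT)).
  by move=> v _; rewrite map_mx_id.
have := measurableT_comp (@normr_measurable R setT) mdot measurableT
  (measurable_itv `]-oo, tau]).
by rewrite setTI; congr vmeasurable; apply: eq_set => v; rewrite /= in_itv.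
Qed.

End measurable_rowvec.

Lemma sum_prob_le d (T : measurableType d) (R : realType) (P : probability T R)
    (I : finType) (A : I -> set T) (K : R) :
  (forall i, measurable (A i)) -> (forall t, \sum_i \1_(A i) t <= K) ->
  (\sum_i P (A i) <= K%:E)%E.
Proof.
move=> mA sum_le.
have mI i : measurable_fun setT (EFin \o \1_(A i) : T -> \bar R).
  exact/measurable_EFinP/measurable_indic.
have -> : (\sum_i P (A i) = \sum_i \int[P]_(t in setT) (\1_(A i) t)%:E)%E.
  by apply: eq_bigr => i _; rewrite integral_indic // setIT.
have I_ge0 i t : setT t -> (0 <= (\1_(A i) t)%:E :> \bar R)%E by rewrite lee_fin.
rewrite -(ge0_integral_sum _ _ mI I_ge0) //.
apply: le_trans (_ : \int[P]_(t in setT) (cst K%:E) t <= _)%E.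
  apply: ge0_le_integral => //.
  - by move=> t _; apply: sume_ge0 => i _; rewrite lee_fin.
  - exact: emeasurable_sum.
  - by move=> t _; rewrite /= sumEFin lee_fin.
by rewrite integral_cst // -[X in (_ * X)%E]/(P setT) probability_setT mule1.
Qed.

Section grid_counting.
Variable R : realType.

Lemma sum_ffun_fiber n N (i : 'I_n) (g : {ffun 'I_n -> 'I_N} -> R) :
  N%:R * \sum_f g f =
  \sum_(f : {ffun 'I_n -> 'I_N}) \sum_(k < N) g [ffun j => if j == i then k else f j].
Proof.
rewrite pair_big /=.
pose swap (p : {ffun 'I_n -> 'I_N} * 'I_N) : {ffun 'I_n -> 'I_N} * 'I_N :=
  ([ffun j => if j == i then p.2 else p.1 j], p.1 i).
have swapK : involutive swap.
  move=> [f k]; rewrite /swap /= ffunE eqxx; congr (_, _).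
  by apply/ffunP => j; rewrite !ffunE; case: eqP => [->|].
rewrite (reindex_inj (inv_inj swapK)) /=.
transitivity (\sum_(f : {ffun 'I_n -> 'I_N}) \sum_(k < N) g f).
  rewrite mulr_sumr; apply: eq_bigr => f _.
  by rewrite sumr_const card_ord mulr_natl.
by rewrite pair_big; apply: eq_bigr => p _; rewrite -{1}(swapK p).
Qed.

Lemma card_window N k0 F : (\sum_(k < N) ((k0 <= k) && (k <= k0 + F)) <= F.+1)%N.
Proof.
suff -> : (\sum_(k < N) ((k0 <= k) && (k <= k0 + F)) = minn N (k0 + F).+1 - minn N k0)%N.
  by lia.
elim: N => [|N IH]; first by rewrite big_ord0 !min0n.
by rewrite big_ord_recr /= IH; case: (leqP k0 N); case: (leqP N (k0 + F)); lia.
Qed.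

(* [(b)%R%:R] is the Iverson bracket of [b]; the [%R] keeps [`|_|] from being
   read as the nat distance, since [%:R] opens nat_scope on its argument. *)
Lemma card_progression_band N (s0 h al be m th : R) :
  0 < h -> 0 < m -> m <= `|al| -> 0 <= th ->
  \sum_(k < N) (`|al * (s0 + k%:R * h) + be| <= th)%R%:R <= 2 * th / (m * h) + 1.
Proof.
move=> h_gt0 m_gt0 m_le th_ge0.
have bound_ge0 : 0 <= 2 * th / (m * h) by rewrite divr_ge0 ?mulr_ge0 // ltW.
pose S (k : 'I_N) := `|al * (s0 + k%:R * h) + be| <= th.
have [k1 Sk1|noS] := pickP S; last first.
  by rewrite big1 => [|k _]; [rewrite addrC ler_wpDr | rewrite -/(S k) noS].
have [k0 Sk0 k0_min] := arg_minnP (fun k : 'I_N => nat_of_ord k) Sk1.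
pose F := Num.truncn (2 * th / (m * h)).
have near k : S k -> (k0 <= k <= k0 + F)%N.
  move=> Sk; have k0_le := k0_min _ Sk; rewrite k0_le -leq_subLR /=.
  rewrite truncn_ge_nat // ler_pdivlMr ?mulr_gt0 //.
  set d := (k - k0)%N%:R.
  have gap : `|al| * (d * h) <= 2 * th.
    rewrite -[d * h]ger0_norm -?normrM; last by rewrite mulr_ge0 // ltW.
    have -> : al * (d * h) = (al * (s0 + k%:R * h) + be) - (al * (s0 + k0%:R * h) + be).
      by rewrite /d natrB //; ring.
    by apply: le_trans (ler_normB _ _) _; have := lerD Sk Sk0; lra.
  by apply: le_trans gap; rewrite mulrCA; apply: ler_wpM2r; rewrite // mulr_ge0 // ltW.
apply: (@le_trans _ _ (\sum_(k < N) ((k0 <= k) && (k <= k0 + F)))%:R).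
  rewrite natr_sum; apply: ler_sum => k _; rewrite -/(S k) ler_nat.
  by case: (boolP (S k)) => // /near ->.
apply: (@le_trans _ _ F.+1%:R); first by rewrite ler_nat card_window.
by rewrite -addn1 natrD lerD2r truncn_le.
Qed.

Definition grid_point n N (s0 h : R) (f : {ffun 'I_n -> 'I_N}) : 'rV[R]_n :=
  \row_j (s0 + (f j)%:R * h).

Lemma card_grid_band n N (x : 'rV[R]_n) (i : 'I_n) (s0 h m th : R) :
  0 < h -> 0 < m -> m <= `|x ord0 i| -> 0 <= th ->
  N%:R * \sum_(f : {ffun 'I_n -> 'I_N}) (`|dotv (grid_point s0 h f) x| <= th)%R%:R
    <= (N ^ n)%:R * (2 * th / (m * h) + 1).
Proof.
move=> h_gt0 m_gt0 m_le th_ge0; rewrite (sum_ffun_fiber i).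
apply: (@le_trans _ _ (\sum_(f : {ffun 'I_n -> 'I_N}) (2 * th / (m * h) + 1))); last first.
  by rewrite sumr_const card_ffun !card_ord [(N ^ n)%:R * _]mulr_natl.
apply: ler_sum => f _.
pose be := \sum_(j | j != i) x ord0 j * (s0 + (f j)%:R * h).
rewrite (eq_bigr (fun k : 'I_N => (`|x ord0 i * (s0 + k%:R * h) + be| <= th)%R%:R)).
  exact: card_progression_band.
move=> k _; rewrite dotvC /dotv (bigD1 i) //= !mxE ffunE eqxx.
congr ((`|_ + _| <= th)%R%:R).
by apply: eq_bigr => j /negbTE ji; rewrite !mxE ffunE ji.
Qed.

Definition odd_grid n N (f : {ffun 'I_n -> 'I_N}) : 'rV[R]_n := grid_point (1 - N%:R) 2 f.

Lemma odd_grid_neq0 n N (f : {ffun 'I_n -> 'I_N}) : (0 < n)%N -> ~~ odd N ->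
  odd_grid f != 0.
Proof.
move=> n_gt0 evenN; apply/negP => /eqP/rowP/(_ (Ordinal n_gt0)); rewrite !mxE.
set k := nat_of_ord _ => coord0.
have /eqP : (k.*2.+1)%:R = N%:R :> R by rewrite -addn1 natrD -muln2 natrM; lra.
by rewrite eqr_nat => /eqP eqN; move: evenN; rewrite -eqN /= odd_double.
Qed.

Lemma norm2_odd_grid_le n N (f : {ffun 'I_n -> 'I_N}) :
  norm2 (odd_grid f) <= N%:R * Num.sqrt n%:R.
Proof.
rewrite norm2E -[N%:R]ger0_norm // -sqrtr_sqr -sqrtrM ?sqr_ge0 // ler_sqrt; last first.
  by rewrite mulr_ge0 ?sqr_ge0.
rewrite mulr_natr -[n in _ *+ n]card_ord -sumr_const; apply: ler_sum => j _.
rewrite !mxE -expr2; have : ((f j).+1 <= N)%N := ltn_ord (f j).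
rewrite -(ler_nat R) -addn1 natrD => k_lt; have k_ge0 : 0 <= (f j)%:R :> R by [].
nra.
Qed.

Lemma card_odd_grid_band n N (x : 'rV[R]_n) (th : R) : (0 < n)%N -> x != 0 -> 0 <= th ->
  N%:R * \sum_(f : {ffun 'I_n -> 'I_N}) (`|dotv (odd_grid f) x| <= th)%R%:R
    <= (N ^ n)%:R * (th * Num.sqrt n%:R / norm2 x + 1).
Proof.
move=> n_gt0 x_neq0 th_ge0; have [i x_i] := exists_big_coord x n_gt0.
have sqrt_n_gt0 : 0 < Num.sqrt n%:R :> R by rewrite sqrtr_gt0 ltr0n.
have x_gt0 : 0 < norm2 x by rewrite norm2_gt0.
have two_gt0 : 0 < 2 :> R by lra.
have := card_grid_band N (1 - N%:R) two_gt0 (divr_gt0 x_gt0 sqrt_n_gt0) x_i th_ge0.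
by congr (_ <= _ * (_ + 1)); field; rewrite !gt_eqF.
Qed.

End grid_counting.

Arguments odd_grid {R n N} f.

Section slab_probability.
Context d (T : measurableType d) (R : realType) (P : probability T R) (n : nat).
Variables (rad : R) (y : T -> 'rV[R]_n).
Hypotheses (rad_gt0 : 0 < rad) (y_unif : uniform_on_sphere P rad y).

Lemma measurable_uniform_on_sphere : measurable_fun setT (y : T -> rowvec R n).
Proof. by case: y_unif => _ y_meas _ _ A /y_meas; rewrite setTI. Qed.

Lemma measurable_slab_event b tau : measurable (y @^-1` slab b tau).
Proof.
by rewrite -[_ @^-1` _]setTI; apply: measurable_uniform_on_sphere => //; apply: vmeasurable_slab.
Qed.

Lemma prob_slab_rotation b c tau : dotv b b = dotv c c ->
  P (y @^-1` slab b tau) = P (y @^-1` slab c tau).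
Proof.
move=> bb_cc; have [Q Q_orth bQ] := householder_reflection bb_cc.
case: y_unif => _ _ y_inv; rewrite (y_inv Q _ Q_orth (vmeasurable_slab b tau)).
by congr (P _); apply/funext => t; rewrite /preimage /slab /= bQ.
Qed.

Lemma prob_slab_grid_le b tau N : (0 < n)%N -> b != 0 -> 0 <= tau ->
  (0 < N)%N -> ~~ odd N ->
  fine (P (y @^-1` slab b tau)) <= tau * n%:R / (norm2 b * rad) + N%:R^-1.
Proof.
move=> n_gt0 b_neq0 tau_ge0 N_gt0 evenN.
have p_fin : P (y @^-1` slab b tau) \is a fin_num.
  exact: fin_num_measure (measurable_slab_event b tau).
set p := fine _; have b_gt0 : 0 < norm2 b by rewrite norm2_gt0.
have z_gt0 f : 0 < norm2 (@odd_grid R n N f) by rewrite norm2_gt0 odd_grid_neq0.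
pose c (f : {ffun 'I_n -> 'I_N}) := (norm2 b / norm2 (odd_grid f)) *: odd_grid f.
have cc f : dotv (c f) (c f) = dotv b b.
  by rewrite dotvZl dotvZr -!norm2_sqr; field; rewrite gt_eqF.
pose s := Num.sqrt (n%:R : R); have sqrt_n : n%:R = s ^+ 2 by rewrite sqr_sqrtr.
pose th := tau * (N%:R * s) / norm2 b.
have th_ge0 : 0 <= th by rewrite /th divr_ge0 ?mulr_ge0 ?sqrtr_ge0 // ltW.
have in_band f t : \1_(y @^-1` slab (c f) tau) t <= (`|dotv (odd_grid f) (y t)| <= th)%R%:R.
  rewrite indicE ler_nat; case: (boolP (_ \in _)) => // /set_mem.
  rewrite /preimage /= slabZ ?divr_gt0 // /slab /= invf_div mulrA => zy_le.
  rewrite lt0b; apply: le_trans zy_le _; apply: ler_wpM2r; first by rewrite invr_ge0 ltW.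
  by apply: ler_wpM2l => //; exact: norm2_odd_grid_le.
have sum_le : (\sum_f P (y @^-1` slab (c f) tau) <=
    ((N ^ n)%:R * (th * s / rad + 1) / N%:R)%:E)%E.
  apply: sum_prob_le => [f|t]; first exact: measurable_slab_event.
  apply: le_trans (_ : _ <= \sum_f (`|dotv (odd_grid f) (y t)| <= th)%R%:R) _.
    by apply: ler_sum => f _; exact: in_band.
  rewrite ler_pdivlMr ?ltr0n // mulrC.
  have [y_sphere _ _] := y_unif; rewrite -(y_sphere t).
  apply: card_odd_grid_band => //; rewrite -norm2_gt0 y_sphere //.
have sum_eq : (\sum_f P (y @^-1` slab (c f) tau) = ((N ^ n)%:R * p)%:E)%E.
  under eq_bigr => f _ do rewrite (prob_slab_rotation _ (cc f)) -(fineK p_fin).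
  by rewrite sumEFin sumr_const card_ffun !card_ord [(N ^ n)%:R * _]mulr_natl.
move: sum_le; rewrite sum_eq lee_fin -mulrA ler_pM2l ?ltr0n ?expn_gt0 ?N_gt0 //.
move/le_trans; apply; rewrite le_eqVlt; apply/orP; left; apply/eqP.
by rewrite /th sqrt_n; field; rewrite pnatr_eq0 -lt0n N_gt0 !gt_eqF.
Qed.

Lemma prob_slab_le b tau : (0 < n)%N -> b != 0 -> 0 <= tau ->
  (P (y @^-1` slab b tau) <= (tau * n%:R / (norm2 b * rad))%:E)%E.
Proof.
move=> n_gt0 b_neq0 tau_ge0.
rewrite -(fineK (fin_num_measure _ _ (measurable_slab_event b tau))) lee_fin.
rewrite leNgt; apply/negP => /ltr_add_invr [k]; apply/negP; rewrite -leNgt.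
apply: le_trans (prob_slab_grid_le (N := k.+1.*2) n_gt0 b_neq0 tau_ge0 _ _) _.
- by rewrite double_gt0.
- by rewrite odd_double.
by rewrite lerD2l lef_pV2 ?posrE ?ltr0n ?double_gt0 // ler_nat -addnn leq_addr.
Qed.

End slab_probability.

Theorem lemma8p1 (R : realType) (n : nat) (delta rad : R)
    (a : 'rV[R]_n)
    (d : measure_display) (T : measurableType d) (P : probability T R)
    (y : T -> 'rV[R]_n) (rnd : R -> R) :
  (2 <= n)%N -> 0 < delta -> 0 < rad ->
  a != 0 ->
  (forall i, -2 <= a ord0 i <= 2) ->
  dotv a (const_mx 1) = 0 ->
  uniform_on_sphere P rad y ->
  measurable_fun setT rnd ->
  (forall x, `|rnd x - x| <= delta) ->
  (P [set t | dotv a (map_mx rnd (y t)) = 0%R] <=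
    ((2 * delta * (n%:R) ^+ 2) / (norm2 a * rad))%:E)%E.
Proof.
move=> n_ge2 delta_gt0 rad_gt0 a_neq0 a_bnd _ y_unif rnd_meas rnd_err.
have n_gt0 : (0 < n)%N by apply: leq_trans n_ge2.
have l1_le : \sum_i `|a ord0 i| <= 2 * n%:R.
  rewrite mulr_natr -[n in _ *+ n]card_ord -sumr_const.
  by apply: ler_sum => i _; rewrite ler_norml a_bnd.
pose tau := delta * \sum_i `|a ord0 i|.
have tau_ge0 : 0 <= tau by rewrite mulr_ge0 ?sumr_ge0 // ltW.
have event_sub : [set t | dotv a (map_mx rnd (y t)) = 0] `<=` y @^-1` slab a tau.
  by move=> t /= dot0; apply: slab_of_dotv_eq0 dot0 => i; rewrite mxE distrC.
have event_meas : measurable [set t | dotv a (map_mx rnd (y t)) = 0].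
  have := measurableT_comp (measurable_dotv_map a rnd_meas)
    (measurable_uniform_on_sphere y_unif) measurableT (measurable_set1 0).
  by rewrite setTI.
apply: le_trans (le_measure P (mem_set event_meas)
  (mem_set (measurable_slab_event y_unif a tau)) event_sub) _.
apply: le_trans (prob_slab_le rad_gt0 y_unif n_gt0 a_neq0 tau_ge0) _.
rewrite lee_fin; apply: ler_wpM2r; first by rewrite invr_ge0 mulr_ge0 ?sqrtr_ge0 ?ltW.
rewrite expr2 mulrA; apply: ler_wpM2r => //.
by rewrite /tau (mulrC 2) -mulrA; apply: ler_wpM2l l1_le; exact: ltW.
Qed.
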